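(* Let $G$ be a discrete group. If every countable subgroup $H$ of $G$ satisfies the $\ell^1$ Bass conjecture (i.e. $HS^1:K_0(\ell^1(H))\to\ell^1([H])$ takes values in $\bigoplus_{\mathrm{FC}(H)}\mathbb{C}$), then $G$ satisfies the $\ell^1$ Bass conjecture, i.e. $HS^1:K_0(\ell^1(G))\to\ell^1([G])$ takes values in $\bigoplus_{\mathrm{FC}(G)}\mathbb{C}$.
   Context: For a discrete group $G$: $[G]$ is the set of conjugacy classes, $\mathrm{FC}(G)\subset[G]$ those of elements of finite order; $\ell^1(G)$ is the Banach convolution algebra of absolutely summable functions $G\to\mathbb{C}$, written $a=\sum a_g g$; $\ell^1([G])$ is the Banach space of absolutely summable functions on $[G]$. The trace $p:\ell^1(G)\to\ell^1([G])$, $p(a)=\sum_{[x]}\big(\sum_{g\in[x]}a_g\big)[x]$, induces the $\ell^1$ Hattori–Stallings trace $HS^1:K_0(\ell^1(G))\to\ell^1([G])$ (evaluate $p$ on the trace of an idempotent matrix representing a finitely generated projective module). *)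

From Stdlib Require Import Reals List ProofIrrelevance.
Import ListNotations.
Open Scope R_scope.

Definition C : Type := (R * R)%type.
Definition C0 : C := (0, 0).
Definition Cadd (z w : C) : C := (fst z + fst w, snd z + snd w).
Definition Copp (z : C) : C := (- fst z, - snd z).
Definition Csub (z w : C) : C := Cadd z (Copp w).
Definition Cmul (z w : C) : C :=
  (fst z * fst w - snd z * snd w, fst z * snd w + snd z * fst w).
Definition Cnorm (z : C) : R := sqrt (fst z * fst z + snd z * snd z).

Definition Csum {T : Type} (f : T -> C) (L : list T) : C :=
  fold_right Cadd C0 (map f L).
Definition Rsum {T : Type} (f : T -> R) (L : list T) : R :=
  fold_right Rplus 0 (map f L).

Definition has_sum_on {T : Type} (P : T -> Prop) (f : T -> C) (s : C) : Prop :=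
  forall eps : R, 0 < eps ->
    exists L0 : list T, (forall x, In x L0 -> P x) /\
      forall L : list T, NoDup L -> (forall x, In x L -> P x) -> incl L0 L ->
        Cnorm (Csub (Csum f L) s) < eps.

Definition has_sum {T : Type} (f : T -> C) (s : C) : Prop :=
  has_sum_on (fun _ => True) f s.

Definition is_l1 {T : Type} (f : T -> C) : Prop :=
  exists M : R, forall L : list T, NoDup L -> Rsum (fun x => Cnorm (f x)) L <= M.

Record group := Group {
  gT :> Type;
  gmul : gT -> gT -> gT;
  ginv : gT -> gT;
  gone : gT;
  gmulA : forall x y z, gmul x (gmul y z) = gmul (gmul x y) z;
  gmul1l : forall x, gmul gone x = x;
  gmulVl : forall x, gmul (ginv x) x = gone
}.

Fixpoint gpow (G : group) (x : G) (n : nat) : G :=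
  match n with O => gone G | S m => gmul G x (gpow G x m) end.

Definition finite_order (G : group) (x : G) : Prop :=
  exists n : nat, (0 < n)%nat /\ gpow G x n = gone G.

Definition conjugate (G : group) (x y : G) : Prop :=
  exists g : G, y = gmul G (ginv G g) (gmul G x g).

Record subgroup (G : group) := Subgroup {
  sg_mem : G -> Prop;
  sg_one : sg_mem (gone G);
  sg_mul : forall x y, sg_mem x -> sg_mem y -> sg_mem (gmul G x y);
  sg_inv : forall x, sg_mem x -> sg_mem (ginv G x)
}.

Section SubGroup.
Variables (G : group) (S : subgroup G).
Definition sub_T : Type := { x : G | sg_mem G S x }.
Definition sub_mul (x y : sub_T) : sub_T :=
  exist _ (gmul G (proj1_sig x) (proj1_sig y))
          (sg_mul G S _ _ (proj2_sig x) (proj2_sig y)).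
Definition sub_inv (x : sub_T) : sub_T :=
  exist _ (ginv G (proj1_sig x)) (sg_inv G S _ (proj2_sig x)).
Definition sub_one : sub_T := exist _ (gone G) (sg_one G S).

Lemma sub_eq (x y : sub_T) : proj1_sig x = proj1_sig y -> x = y.
Proof.
  destruct x as [x px], y as [y py]; simpl; intros ->.
  f_equal; apply proof_irrelevance.
Qed.

Lemma sub_mulA x y z : sub_mul x (sub_mul y z) = sub_mul (sub_mul x y) z.
Proof. apply sub_eq; simpl; apply gmulA. Qed.
Lemma sub_mul1l x : sub_mul sub_one x = x.
Proof. apply sub_eq; simpl; apply gmul1l. Qed.
Lemma sub_mulVl x : sub_mul (sub_inv x) x = sub_one.
Proof. apply sub_eq; simpl; apply gmulVl. Qed.

Definition sub_group : group :=
  Group sub_T sub_mul sub_inv sub_one sub_mulA sub_mul1l sub_mulVl.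
End SubGroup.

Definition countable_group (G : group) : Prop :=
  exists f : G -> nat, forall x y, f x = f y -> x = y.

(** An n x n matrix over l^1(G) is E : nat -> nat -> (G -> C), with entries
    E i j (i, j < n) absolutely summable functions G -> C. *)
Definition l1_matrix (G : group) (n : nat) (E : nat -> nat -> G -> C) : Prop :=
  forall i j, (i < n)%nat -> (j < n)%nat -> is_l1 (E i j).

(** E * E = E in M_n(l^1(G)), convolution (a*b)(g) = sum_h a(h) b(h^-1 g) *)
Definition idempotent_l1 (G : group) (n : nat) (E : nat -> nat -> G -> C) : Prop :=
  forall i k, (i < n)%nat -> (k < n)%nat -> forall g : G,
    has_sum (fun h : G =>
      Csum (fun j => Cmul (E i j h) (E j k (gmul G (ginv G h) g))) (seq 0 n))
      (E i k g).

Definition mx_trace (G : group) (n : nat) (E : nat -> nat -> G -> C) : G -> C :=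
  fun g => Csum (fun i => E i i g) (seq 0 n).

(** [p(a)] evaluated at the class [x] has value s *)
Definition class_value (G : group) (a : G -> C) (x : G) (s : C) : Prop :=
  has_sum_on (conjugate G x) a s.

(** [p(a)] lies in the direct sum of copies of C indexed by FC(G):
    it is supported on finitely many conjugacy classes, each consisting
    of elements of finite order. *)
Definition in_FC_sum (G : group) (a : G -> C) : Prop :=
  exists L : list G, (forall y, In y L -> finite_order G y) /\
    forall (x : G) (s : C), class_value G a x s -> s <> C0 ->
      exists y, In y L /\ conjugate G x y.

(** Since K_0(l^1 G) is generated by classes of idempotent matrices and
    HS^1 [E] = p(tr E), this is the condition on all idempotent matrices. *)
Definition l1_Bass (G : group) : Prop :=
  forall (n : nat) (E : nat -> nat -> G -> C),
    l1_matrix G n E -> idempotent_l1 G n E ->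
    in_FC_sum G (mx_trace G n E).

(* The entries of an idempotent matrix E over l^1(G) have countable support; adjoining one conjugator
   for each conjugate pair of support points generates a countable subgroup H.  Convolution of the
   entries only involves support points, so E restricts to an idempotent over l^1(H); and since
   support points conjugate in G are conjugate in H, the sum of tr E over a G-class equals its sum
   over the H-class of any support point in it.  Hence p(tr E) over G is read off from p(tr E) over H,
   and finite order passes from H to G. *)
From Pilot Require Import Defs.
From Stdlib Require Import Reals List Lra Lia Classical ClassicalEpsilon Cantor FinFun.
Import ListNotations Defs.
Open Scope R_scope.

Lemma Cadd_0_l z : Cadd C0 z = z.
Proof. destruct z; unfold Cadd, C0; simpl; f_equal; ring. Qed.

Lemma Cadd_0_r z : Cadd z C0 = z.
Proof. destruct z; unfold Cadd, C0; simpl; f_equal; ring. Qed.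

Lemma Cadd_assoc a b c : Cadd a (Cadd b c) = Cadd (Cadd a b) c.
Proof. destruct a, b, c; unfold Cadd; simpl; f_equal; ring. Qed.

Lemma Cmul_0_l z : Cmul C0 z = C0.
Proof. destruct z; unfold Cmul, C0; simpl; f_equal; ring. Qed.

Lemma Cnorm_ge0 z : 0 <= Cnorm z.
Proof. apply sqrt_pos. Qed.

Lemma Cnorm_eq0 z : Cnorm z = 0 -> z = C0.
Proof.
  destruct z as [a b]; unfold Cnorm; simpl; intros H.
  apply sqrt_eq_0 in H; [|nra]. unfold C0; f_equal; nra.
Qed.

Lemma Cnorm_gt0 z : z <> C0 -> 0 < Cnorm z.
Proof.
  intros Hz. destruct (Cnorm_ge0 z) as [Hlt|Heq]; auto.
  symmetry in Heq; apply Cnorm_eq0 in Heq; tauto.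
Qed.

Lemma Cnorm_0_sub s : Cnorm (Csub C0 s) = Cnorm s.
Proof. destruct s; unfold Cnorm, Csub, Cadd, Copp, C0; simpl; f_equal; ring. Qed.

Lemma Csum_app {T} (f : T -> C) L1 L2 : Csum f (L1 ++ L2) = Cadd (Csum f L1) (Csum f L2).
Proof.
  induction L1 as [|x L1 IH]; simpl; [now rewrite Cadd_0_l|].
  unfold Csum in *; simpl. now rewrite IH, Cadd_assoc.
Qed.

Lemma Csum_map {T U} (f : U -> C) (g : T -> U) L : Csum f (map g L) = Csum (fun x => f (g x)) L.
Proof. unfold Csum; now rewrite map_map. Qed.

Lemma Csum_eq0 {T} (f : T -> C) L : (forall x, In x L -> f x = C0) -> Csum f L = C0.
Proof.
  induction L as [|x L IH]; simpl; intros H; auto.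
  unfold Csum in *; simpl. rewrite H, IH by auto. apply Cadd_0_l.
Qed.

Lemma Csum_neq0 {T} (f : T -> C) L : Csum f L <> C0 -> exists x, In x L /\ f x <> C0.
Proof.
  intros H. apply NNPP; intros Hno. apply H, Csum_eq0.
  intros x Hx. apply NNPP; intros Hfx. apply Hno; eauto.
Qed.

Lemma Rsum_map {T U} (f : U -> R) (g : T -> U) L : Rsum f (map g L) = Rsum (fun x => f (g x)) L.
Proof. unfold Rsum; now rewrite map_map. Qed.

Lemma Rsum_lower_bound {T} (f : T -> R) eps L :
  (forall x, In x L -> eps < f x) -> eps * INR (length L) <= Rsum f L.
Proof.
  induction L as [|x L IH]; intros H; [unfold Rsum; simpl; lra|].
  change (length (x :: L)) with (S (length L)). rewrite S_INR. unfold Rsum in *; simpl.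
  assert (eps < f x) by (apply H; simpl; auto).
  assert (eps * INR (length L) <= fold_right Rplus 0 (map f L)) by (apply IH; simpl in H; auto).
  lra.
Qed.

Lemma exists_NoDup_filter {T} (L : list T) (Q : T -> Prop) :
  exists L', NoDup L' /\ forall x, In x L' <-> In x L /\ Q x.
Proof.
  induction L as [|a L [L' [HND HL']]].
  - exists []; split; [constructor | simpl; tauto].
  - destruct (classic (Q a /\ ~ In a L')) as [[Qa Na] | Hn].
    + exists (a :: L'); split; [now constructor|].
      intros x; simpl; rewrite HL'; split.
      * intros [<- | []]; auto.
      * intros [[<- | Hx] Qx]; auto.
    + exists L'; split; auto. intros x; rewrite HL'; simpl; split; [tauto|].
      intros [[<- | Hx] Qx]; auto.
      apply NNPP; intros N; apply Hn; split; auto.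
      intros I; apply N, HL', I.
Qed.

Lemma has_sum_on_eq0 {T} (P : T -> Prop) (f : T -> C) s :
  (forall x, P x -> f x = C0) -> has_sum_on P f s -> s = C0.
Proof.
  intros Hf Hs. apply Cnorm_eq0, Rle_antisym; [|apply Cnorm_ge0].
  apply Rnot_lt_le; intros Hpos.
  destruct (Hs _ Hpos) as [L0 [HL0 HL]].
  destruct (exists_NoDup_filter L0 (fun _ => True)) as [L [HND HLe]].
  assert (HLP : forall x, In x L -> P x) by (intros x Hx; apply HL0, HLe, Hx).
  specialize (HL L HND HLP).
  rewrite Csum_eq0, Cnorm_0_sub in HL by (intros; auto).
  apply (Rlt_irrefl (Cnorm s)), HL. intros x Hx; apply HLe; auto.
Qed.

Section HasSumComp.
Variables (T U : Type) (phi : U -> T).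
Hypothesis phi_inj : Injective phi.
Variables (P : T -> Prop) (P' : U -> Prop) (f : T -> C).
Hypothesis phi_P : forall u, P' u -> P (phi u).
Hypothesis phi_onto_support : forall t, P t -> f t <> C0 -> exists u, phi u = t /\ P' u.

Lemma lift_support_list L0 : (forall t, In t L0 -> P t) ->
  exists L0', (forall u, In u L0' -> P' u) /\
    forall t, In t L0 -> f t <> C0 -> exists u, In u L0' /\ phi u = t.
Proof.
  induction L0 as [|t L0 IH]; intros HL0; [exists []; simpl; tauto|].
  destruct IH as [L1 [HL1 Hcov]]; [intros; apply HL0; simpl; auto|].
  destruct (classic (f t = C0)) as [Ht | Ht].
  - exists L1; split; auto. intros t' [<- | Ht'] Hft'; [tauto | auto].
  - destruct (phi_onto_support t) as [u [<- Hu]]; [apply HL0; simpl; auto | auto |].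
    exists (u :: L1); split; [intros v [<- | Hv]; auto|].
    intros t' [<- | Ht'] Hft'; [exists u; simpl; auto|].
    destruct (Hcov t' Ht' Hft') as [v [Hv <-]]; exists v; simpl; auto.
Qed.

(* A finite set L' of indices in U is completed by the zero terms of L0 missing from its image,
   so that the estimate over T applies to a set with the same partial sum. *)
Lemma has_sum_on_comp s : has_sum_on P f s -> has_sum_on P' (fun u => f (phi u)) s.
Proof.
  intros Hs eps Heps.
  destruct (Hs eps Heps) as [L0 [HL0 Hest]].
  destruct (lift_support_list L0 HL0) as [L0' [HL0' Hcov]].
  exists L0'; split; auto.
  intros L' HND HL' Hincl.
  destruct (exists_NoDup_filter L0 (fun t => ~ In t (map phi L'))) as [Z [HNDZ HZ]].
  assert (HZ0 : forall t, In t Z -> f t = C0).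
  { intros t Ht; apply HZ in Ht; destruct Ht as [Ht Hnot].
    apply NNPP; intros Hft. destruct (Hcov t Ht Hft) as [u [Hu <-]].
    apply Hnot, in_map, Hincl, Hu. }
  specialize (Hest (map phi L' ++ Z)).
  rewrite Csum_app, Csum_map, (Csum_eq0 f Z HZ0), Cadd_0_r in Hest.
  apply Hest.
  - apply NoDup_app; auto.
    + apply Injective_map_NoDup; auto.
    + intros t Ht HtZ; apply HZ in HtZ; tauto.
  - intros t Ht; apply in_app_or in Ht; destruct Ht as [Ht | Ht].
    + apply in_map_iff in Ht; destruct Ht as [u [<- Hu]]; auto.
    + apply HZ in Ht; apply HL0; tauto.
  - intros t Ht; apply in_or_app.
    destruct (classic (In t (map phi L'))); [left | right; apply HZ]; auto.
Qed.

End HasSumComp.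

Lemma l1_level_set_finite {T} (f : T -> C) eps : is_l1 f -> 0 < eps ->
  exists L, forall t, eps < Cnorm (f t) -> In t L.
Proof.
  intros [M HM] Heps.
  destruct (INR_archimed eps M) as [N HN]; [lra|].
  assert (Hshort : forall L, NoDup L -> (forall t, In t L -> eps < Cnorm (f t)) -> (length L < N)%nat).
  { intros L HND HL. specialize (HM L HND). pose proof (Rsum_lower_bound _ _ _ HL).
    destruct (Nat.lt_ge_cases (length L) N) as [Hlt | Hge]; auto.
    apply le_INR in Hge. nra. }
  (* Grow a duplicate-free list inside the level set until it covers it; it cannot reach length N. *)
  assert (Hgrow : forall k L, NoDup L -> (forall t, In t L -> eps < Cnorm (f t)) ->
     (N - length L <= k)%nat -> exists L', forall t, eps < Cnorm (f t) -> In t L').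
  { induction k as [|k IH]; intros L HND HL Hk.
    - specialize (Hshort L HND HL). lia.
    - destruct (classic (forall t, eps < Cnorm (f t) -> In t L)) as [Hall | Hn]; [eauto|].
      apply not_all_ex_not in Hn; destruct Hn as [x Hx].
      apply imply_to_and in Hx; destruct Hx as [Hfx Hnx].
      apply (IH (x :: L)); [now constructor | intros t [<- | Ht]; auto |].
      specialize (Hshort L HND HL). simpl. lia. }
  apply (Hgrow N []); simpl; [constructor | tauto | lia].
Qed.

Definition enumerates {T} (e : nat -> T) (A : T -> Prop) : Prop :=
  forall x, A x -> exists m, e m = x.

Lemma enumerates_list {T} (x0 : T) (L : list T) :
  enumerates (fun m => nth m L x0) (fun x => In x L).
Proof. intros x Hx. destruct (In_nth L x x0 Hx) as [m [_ Hm]]. now exists m. Qed.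

Lemma enumerates_Union {T} (A : nat -> T -> Prop) :
  (forall k, exists e, enumerates e (A k)) -> exists e, enumerates e (fun x => exists k, A k x).
Proof.
  intros HA. destruct (choice _ HA) as [e He].
  exists (fun m => let (k, l) := of_nat m in e k l).
  intros x [k Hx]. destruct (He k x Hx) as [l Hl].
  exists (to_nat (k, l)). now rewrite cancel_of_to.
Qed.

Lemma enumerates_or {T} (A B : T -> Prop) e1 e2 :
  enumerates e1 A -> enumerates e2 B ->
  exists e, enumerates e (fun x => A x \/ B x).
Proof.
  intros HA HB.
  exists (fun m => match of_nat m with (0, l) => e1 l | (_, l) => e2 l end)%nat.
  intros x [Hx | Hx].
  - destruct (HA x Hx) as [l Hl]. exists (to_nat (0, l))%nat. now rewrite cancel_of_to.
  - destruct (HB x Hx) as [l Hl]. exists (to_nat (1, l))%nat. now rewrite cancel_of_to.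
Qed.

Lemma small_inv_INR eps : 0 < eps -> exists k, / (INR k + 1) < eps.
Proof.
  intros Heps. destruct (INR_unbounded (/ eps)) as [k Hk]. exists k.
  pose proof (pos_INR k).
  rewrite <- (Rinv_inv eps). apply Rinv_lt_contravar; [|lra].
  apply Rmult_lt_0_compat; [apply Rinv_0_lt_compat | ]; lra.
Qed.

Lemma l1_support_enumerable {T} (x0 : T) (f : T -> C) :
  is_l1 f -> exists e, enumerates e (fun t => f t <> C0).
Proof.
  intros Hf.
  assert (Hlevel : forall k, exists e, enumerates e (fun t => / (INR k + 1) < Cnorm (f t))).
  { intros k. destruct (l1_level_set_finite f (/ (INR k + 1)) Hf) as [L HL].
    - apply Rinv_0_lt_compat; pose proof (pos_INR k); lra.
    - exists (fun m => nth m L x0). intros t Ht. apply enumerates_list, HL, Ht. }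
  destruct (enumerates_Union _ Hlevel) as [e He].
  exists e. intros t Ht. apply He, small_inv_INR, Cnorm_gt0, Ht.
Qed.

Section GroupFacts.
Variable G : group.

Lemma gmulV (x : G) : gmul G x (ginv G x) = gone G.
Proof.
  rewrite <- (gmul1l G (gmul G x (ginv G x))).
  rewrite <- (gmulVl G (ginv G x)) at 1.
  rewrite <- gmulA, (gmulA G (ginv G x)), gmulVl, gmul1l. apply gmulVl.
Qed.

Lemma gmul1r (x : G) : gmul G x (gone G) = x.
Proof. now rewrite <- (gmulVl G x), gmulA, gmulV, gmul1l. Qed.

Lemma ginv_unique (a z : G) : gmul G a z = gone G -> a = ginv G z.
Proof. intros H. now rewrite <- (gmul1r a), <- (gmulV z), gmulA, H, gmul1l. Qed.

Lemma ginvK (x : G) : ginv G (ginv G x) = x.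
Proof. symmetry; apply ginv_unique, gmulV. Qed.

Lemma ginvM (x y : G) : ginv G (gmul G x y) = gmul G (ginv G y) (ginv G x).
Proof.
  symmetry; apply ginv_unique.
  now rewrite <- gmulA, (gmulA G (ginv G x)), gmulVl, gmul1l, gmulVl.
Qed.

Lemma ginv1 : ginv G (gone G) = gone G.
Proof. symmetry; apply ginv_unique, gmul1l. Qed.

Lemma conjugate_sym (x y : G) : conjugate G x y -> conjugate G y x.
Proof.
  intros [g ->]. exists (ginv G g). rewrite ginvK.
  now rewrite !gmulA, gmulV, gmul1l, <- gmulA, gmulV, gmul1r.
Qed.

Lemma conjugate_trans (x y z : G) : conjugate G x y -> conjugate G y z -> conjugate G x z.
Proof. intros [g ->] [h ->]. exists (gmul G g h). now rewrite ginvM, <- !gmulA. Qed.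

End GroupFacts.

Lemma conjugate_sub (G : group) (S : subgroup G) (a b : sub_group G S) :
  conjugate (sub_group G S) a b -> conjugate G (proj1_sig a) (proj1_sig b).
Proof. intros [c ->]. now exists (proj1_sig c). Qed.

Lemma gpow_sub (G : group) (S : subgroup G) (y : sub_group G S) k :
  proj1_sig (gpow (sub_group G S) y k) = gpow G (proj1_sig y) k.
Proof. induction k as [|k IH]; simpl; auto. now rewrite <- IH. Qed.

Lemma finite_order_sub (G : group) (S : subgroup G) (y : sub_group G S) :
  finite_order (sub_group G S) y -> finite_order G (proj1_sig y).
Proof. intros [k [Hk Hy]]. exists k; split; auto. now rewrite <- gpow_sub, Hy. Qed.

Lemma proj1_sig_injective (G : group) (S : subgroup G) :
  Injective (fun h : sub_group G S => proj1_sig h).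
Proof. intros x y; apply sub_eq. Qed.

Section GeneratedSubgroup.
Variables (G : group) (gen : nat -> G).

Definition letter (l : bool * nat) : G :=
  if fst l then ginv G (gen (snd l)) else gen (snd l).

Fixpoint eval_word (w : list (bool * nat)) : G :=
  match w with [] => gone G | l :: w' => gmul G (letter l) (eval_word w') end.

Definition inv_word (w : list (bool * nat)) : list (bool * nat) :=
  rev (map (fun l => (negb (fst l), snd l)) w).

Lemma eval_word_app w1 w2 : eval_word (w1 ++ w2) = gmul G (eval_word w1) (eval_word w2).
Proof. induction w1 as [|l w1 IH]; simpl; [now rewrite gmul1l | now rewrite IH, gmulA]. Qed.

Lemma eval_inv_word w : eval_word (inv_word w) = ginv G (eval_word w).
Proof.
  unfold inv_word. induction w as [|[[|] m] w IH]; simpl; [now rewrite ginv1 | |];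
    rewrite eval_word_app, IH, ginvM; unfold letter; simpl; now rewrite ?ginvK, gmul1r.
Qed.

Definition gen_subgroup : subgroup G.
Proof.
  refine (Subgroup G (fun x => exists w, x = eval_word w) _ _ _).
  - now exists [].
  - intros x y [w1 ->] [w2 ->]; exists (w1 ++ w2); now rewrite eval_word_app.
  - intros x [w ->]; exists (inv_word w); now rewrite eval_inv_word.
Defined.

Lemma mem_gen_subgroup m : sg_mem G gen_subgroup (gen m).
Proof. exists [(false, m)]; simpl; unfold letter; simpl; now rewrite gmul1r. Qed.

Fixpoint code_word (w : list (bool * nat)) : nat :=
  match w with
  | [] => O
  | (b, m) :: w' => S (to_nat (to_nat (if b then 1 else 0, m), code_word w'))%nat
  end.

Lemma code_word_inj : Injective code_word.
Proof.
  intros w1; induction w1 as [|[b m] w1 IH]; intros [|[b' m'] w2]; cbn [code_word];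
    try discriminate; auto.
  intros H; apply Nat.succ_inj, to_nat_inj in H.
  pose proof (f_equal fst H) as Hl; pose proof (f_equal snd H) as Hw; cbn [fst snd] in Hl, Hw.
  apply to_nat_inj in Hl; injection Hl as Hb ->.
  apply IH in Hw as ->. destruct b, b'; now try discriminate.
Qed.

Lemma gen_subgroup_countable : countable_group (sub_group G gen_subgroup).
Proof.
  set (word := fun x : sub_group G gen_subgroup =>
    proj1_sig (constructive_indefinite_description _ (proj2_sig x))).
  exists (fun x => code_word (word x)).
  intros x y Hxy. apply code_word_inj in Hxy. apply sub_eq.
  unfold word in Hxy.
  destruct (constructive_indefinite_description _ _) as [w1 E1].
  destruct (constructive_indefinite_description _ _) as [w2 E2]. simpl in Hxy.
  now rewrite E1, E2, Hxy.
Qed.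

End GeneratedSubgroup.

Section MatrixSupport.
Variables (G : group) (n : nat) (E : nat -> nat -> G -> C).

Definition entry_support (g : G) : Prop :=
  exists i j, (i < n)%nat /\ (j < n)%nat /\ E i j g <> C0.

Lemma trace_support g : mx_trace G n E g <> C0 -> entry_support g.
Proof.
  intros Hg. destruct (Csum_neq0 _ _ Hg) as [i [Hi Hii]].
  apply in_seq in Hi. exists i, i; repeat split; auto; lia.
Qed.

Lemma entry_support_enumerable : l1_matrix G n E -> exists e, enumerates e entry_support.
Proof.
  intros Hl.
  assert (Hij : forall i j, exists e,
    enumerates e (fun g => (i < n)%nat /\ (j < n)%nat /\ E i j g <> C0)).
  { intros i j.
    destruct (Nat.lt_ge_cases i n) as [Hi | Hi]; [|exists (fun _ => gone G); intros g Hg; lia].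
    destruct (Nat.lt_ge_cases j n) as [Hj | Hj]; [|exists (fun _ => gone G); intros g Hg; lia].
    destruct (l1_support_enumerable (gone G) (E i j) (Hl i j Hi Hj)) as [e He].
    exists e; intros g [_ [_ Hg]]; auto. }
  apply enumerates_Union; intros i. apply enumerates_Union, Hij.
Qed.

Record adapted (S : subgroup G) : Prop := {
  adapted_support : forall g, entry_support g -> sg_mem G S g;
  adapted_conjugator : forall a b, entry_support a -> entry_support b -> conjugate G a b ->
    exists c, sg_mem G S c /\ b = gmul G (ginv G c) (gmul G a c)
}.

Lemma exists_conjugators (e : nat -> G) : exists c : nat -> G, forall m1 m2,
  conjugate G (e m1) (e m2) ->
  let g := c (to_nat (m1, m2)) in e m2 = gmul G (ginv G g) (gmul G (e m1) g).
Proof.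
  assert (Hc : forall m, exists g, let (m1, m2) := of_nat m in
    conjugate G (e m1) (e m2) -> e m2 = gmul G (ginv G g) (gmul G (e m1) g)).
  { intros m; destruct (of_nat m) as [m1 m2].
    destruct (classic (conjugate G (e m1) (e m2))) as [[g Hg] | Hn];
      [exists g | exists (gone G)]; tauto. }
  destruct (choice _ Hc) as [c Hspec]. exists c. intros m1 m2.
  specialize (Hspec (to_nat (m1, m2))). now rewrite cancel_of_to in Hspec.
Qed.

Lemma exists_countable_adapted_subgroup : l1_matrix G n E ->
  exists S, countable_group (sub_group G S) /\ adapted S.
Proof.
  intros Hl.
  destruct (entry_support_enumerable Hl) as [e He].
  destruct (exists_conjugators e) as [c Hc].
  destruct (enumerates_or entry_support (fun g => exists m, c m = g) e c He (fun g Hg => Hg))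
    as [gen Hgen].
  assert (Hmem : forall g, entry_support g \/ (exists m, c m = g) -> sg_mem G (gen_subgroup G gen) g).
  { intros g Hg. destruct (Hgen g Hg) as [m <-]. apply mem_gen_subgroup. }
  exists (gen_subgroup G gen); split; [apply gen_subgroup_countable | split].
  - intros g Hg; apply Hmem; auto.
  - intros a b Ha Hb Hab.
    destruct (He a Ha) as [m1 <-], (He b Hb) as [m2 <-].
    exists (c (to_nat (m1, m2))); split; [apply Hmem; eauto | apply (Hc m1 m2 Hab)].
Qed.

End MatrixSupport.

Section Restriction.
Variables (G : group) (S : subgroup G) (n : nat) (E : nat -> nat -> G -> C).

Definition restrict_mx (i j : nat) (h : sub_group G S) : C := E i j (proj1_sig h).

Lemma l1_matrix_restrict : l1_matrix G n E -> l1_matrix (sub_group G S) n restrict_mx.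
Proof.
  intros Hl i j Hi Hj. destruct (Hl i j Hi Hj) as [M HM]. exists M. intros L HND.
  unfold restrict_mx. rewrite <- (Rsum_map (fun g => Cnorm (E i j g)) (fun h : sub_group G S => proj1_sig h)).
  apply HM, Injective_map_NoDup; auto. apply proj1_sig_injective.
Qed.

Hypothesis S_adapted : adapted G n E S.

Lemma idempotent_restrict : idempotent_l1 G n E -> idempotent_l1 (sub_group G S) n restrict_mx.
Proof.
  intros Hid i k Hi Hk g.
  set (conv := fun h : G =>
    Csum (fun j => Cmul (E i j h) (E j k (gmul G (ginv G h) (proj1_sig g)))) (seq 0 n)).
  enough (Hcomp : forall h, conv h <> C0 -> exists u : sub_group G S, proj1_sig u = h /\ True)
    by exact (has_sum_on_comp _ _ _ (proj1_sig_injective G S) (fun _ => True) (fun _ => True)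
      conv (fun _ _ => I) (fun h _ => Hcomp h) _ (Hid i k Hi Hk (proj1_sig g))).
  intros h Hh. destruct (Csum_neq0 _ _ Hh) as [j [Hj Hterm]]. apply in_seq in Hj.
  assert (Hsupp : entry_support G n E h).
  { exists i, j; repeat split; [auto | lia |]. intros Z; apply Hterm; rewrite Z; apply Cmul_0_l. }
  now exists (exist _ h (adapted_support _ _ _ _ S_adapted h Hsupp)).
Qed.

Lemma class_value_restrict (x : G) (a : sub_group G S) s :
  entry_support G n E (proj1_sig a) -> conjugate G x (proj1_sig a) ->
  class_value G (mx_trace G n E) x s ->
  class_value (sub_group G S) (mx_trace (sub_group G S) n restrict_mx) a s.
Proof.
  intros Ha Hxa Hcv.
  refine (has_sum_on_comp _ _ _ (proj1_sig_injective G S) (conjugate G x) _ _ _ _ _ Hcv).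
  - intros h Hah. apply (conjugate_trans G x (proj1_sig a)); auto. now apply conjugate_sub.
  - intros g Hxg Hg. apply trace_support in Hg.
    assert (Hag : conjugate G (proj1_sig a) g)
      by (apply (conjugate_trans G _ x); auto; now apply conjugate_sym).
    destruct (adapted_conjugator _ _ _ _ S_adapted _ _ Ha Hg Hag) as [c [Hc Hcg]].
    exists (exist _ g (adapted_support _ _ _ _ S_adapted g Hg)); split; auto.
    exists (exist _ c Hc). now apply sub_eq.
Qed.

Lemma in_FC_sum_of_restrict :
  in_FC_sum (sub_group G S) (mx_trace (sub_group G S) n restrict_mx) ->
  in_FC_sum G (mx_trace G n E).
Proof.
  intros [L [Hfin HL]].
  exists (map (fun h : sub_group G S => proj1_sig h) L); split.
  - intros y Hy. apply in_map_iff in Hy; destruct Hy as [h [<- Hh]].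
    now apply finite_order_sub, Hfin.
  - intros x s Hcv Hs.
    destruct (classic (exists a, conjugate G x a /\ mx_trace G n E a <> C0)) as [[a [Hxa Ha]] | Hno].
    + apply trace_support in Ha.
      set (a' := exist _ a (adapted_support _ _ _ _ S_adapted a Ha) : sub_group G S).
      destruct (HL a' s (class_value_restrict x a' s Ha Hxa Hcv) Hs) as [y [Hy Hay]].
      exists (proj1_sig y); split; [now apply in_map|].
      apply (conjugate_trans G x a); auto. now apply (conjugate_sub G S a' y).
    + exfalso; apply Hs, (has_sum_on_eq0 (conjugate G x) (mx_trace G n E) s); auto.
      intros g Hg; apply NNPP; intros Hn; apply Hno; eauto.
Qed.

End Restriction.

Theorem lemma1p5 (G : group) :
  (forall H : subgroup G, countable_group (sub_group G H) ->
     l1_Bass (sub_group G H)) ->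
  l1_Bass G.
Proof.
  intros Hbass n E Hl Hid.
  destruct (exists_countable_adapted_subgroup G n E Hl) as [S [Hcount Hadapted]].
  apply (in_FC_sum_of_restrict G S n E Hadapted).
  apply (Hbass S Hcount n).
  - now apply l1_matrix_restrict.
  - now apply idempotent_restrict.
Qed.
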